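(* Let $n$ be a positive integer, $p_1,\dots,p_n$ distinct primes, and $(X,r)$ an indecomposable multipermutation solution of the YBE with $|X|=p_1\cdots p_n$. Then both $(X,r)$ and the solution $(\mathcal G(X,r),r_{\mathcal G})$ associated to the left brace $\mathcal G(X,r)$ have multipermutation level at most $n$.
   Context: A solution of the Yang–Baxter equation (YBE) is a pair $(X,r)$, where $X$ is a non-empty set and $r\colon X\times X\to X\times X$, written $r(x,y)=(\sigma_x(y),\gamma_y(x))$, satisfies: $r^2=\mathrm{id}$; all $\sigma_x,\gamma_y$ are bijections of $X$; and $r_{12}r_{23}r_{12}=r_{23}r_{12}r_{23}$ on $X^3$, where $r_{12}=r\times\mathrm{id}_X$, $r_{23}=\mathrm{id}_X\times r$. $\mathcal G(X,r)=\langle\sigma_x:x\in X\rangle\le\mathrm{Sym}_X$; $(X,r)$ is indecomposable if $\mathcal G(X,r)$ is transitive on $X$. Retract: $x\sim y\iff\sigma_x=\sigma_y$, inducing a solution $\mathrm{Ret}(X,r)$ on $X/{\sim}$; $\mathrm{Ret}^k$ is the $k$-fold iterate; $(X,r)$ is multipermutation if $|\mathrm{Ret}^k(X,r)|=1$ for some $k\ge1$, the least such $k$ being its multipermutation level. A left brace is a set $B$ with operations $+$ and $\circ$ (written $ab$) such that $(B,+)$ is an abelian group, $(B,\circ)$ is a group and $a(b+c)+a=ab+ac$; $\lambda_a(b)=-a+ab$. The solution associated to $B$ is $(B,r_B)$ with $r_B(a,b)=(\lambda_a(b),\lambda^{-1}_{\lambda_a(b)}(a))$. Brace structure on $\mathcal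 G(X,r)$: the structure group $G(X,r)=\langle x\in X\mid xy=\sigma_x(y)\gamma_y(x)\rangle$ is a left brace with additive group free abelian on $X$ and $\lambda_x(y)=\sigma_x(y)$; $x\mapsto\sigma_x$ extends to a group epimorphism $\phi\colon G(X,r)\to\mathcal G(X,r)$ with kernel $\{a: ab=a+b\ \forall b\}$, and $\mathcal G(X,r)$ carries the unique left brace structure making $\phi$ a brace homomorphism. *)

From HB Require Import structures.
From mathcomp Require Import all_boot all_fingroup.
Unset Printing Implicit Defensive.

Record sol := Sol { scar : finType; smap : scar * scar -> scar * scar }.

(* r(x,y) = (sigma_x(y), gamma_y(x)) *)
Definition ssig (S : sol) (x y : scar S) : scar S := (@smap S (x, y)).1.
Definition sgam (S : sol) (y x : scar S) : scar S := (@smap S (x, y)).2.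

Definition r12 (S : sol) (t : scar S * scar S * scar S) : scar S * scar S * scar S :=
  let: (x, y, z) := t in let: (a, b) := @smap S (x, y) in (a, b, z).
Definition r23 (S : sol) (t : scar S * scar S * scar S) : scar S * scar S * scar S :=
  let: (x, y, z) := t in let: (b, c) := @smap S (y, z) in (x, b, c).

Definition is_solution (S : sol) : Prop :=
  [/\ forall q, @smap S (@smap S q) = q,
      forall x, bijective (ssig S x),
      forall y, bijective (sgam S y) &
      forall t, r12 S (r23 S (r12 S t)) = r23 S (r12 S (r23 S t))].

Definition sigf (S : sol) (x : scar S) : {ffun scar S -> scar S} :=
  [ffun y => ssig S x y].
Definition retcls (S : sol) (x : scar S) : {set scar S} :=
  [set y | sigf S y == sigf S x].
Definition retsets (S : sol) : {set {set scar S}} := retcls S @: setT.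
Definition retT (S : sol) : finType := {C : {set scar S} | C \in retsets S}.
Definition rcls (S : sol) (x : scar S) : retT S :=
  @exist _ (fun C => C \in retsets S) (retcls S x) (imset_f (retcls S) (in_setT x)).
Definition retmap (S : sol) (q : retT S * retT S) : retT S * retT S :=
  match [pick x in val q.1], [pick y in val q.2] with
  | Some x, Some y => (rcls S (ssig S x y), rcls S (sgam S y x))
  | _, _ => q
  end.
Definition Ret (S : sol) : sol := @Sol (retT S) (@retmap S).

Definition multipermutation (S : sol) : Prop :=
  exists k, (0 < k)%N /\ #|{: scar (iter k Ret S)}| = 1%N.
Definition mpl_le (S : sol) (n : nat) : Prop :=
  exists k, (0 < k <= n)%N /\ #|{: scar (iter k Ret S)}| = 1%N.

Definition to_perm (T : finType) (f : T -> T) : {perm T} :=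
  insubd (1%g : {perm T}) [ffun x => f x].
Arguments to_perm {T}.
Definition sigma_perm (S : sol) (x : scar S) : {perm scar S} := to_perm (ssig S x).
Definition Ggrp (S : sol) : {group {perm scar S}} :=
  <<[set sigma_perm S x | x : scar S]>>%G.
Definition indecomposable (S : sol) : Prop :=
  [transitive Ggrp S, on [set: scar S] | 'P].

(* usual composition (g o h)(x) = g (h x); mathcomp's (h * g) x = g (h x) *)
Definition pcomp (T : finType) (g h : {perm T}) : {perm T} := (h * g)%g.

Record brace_data (T : finType) := BraceData {
  badd : {perm T} -> {perm T} -> {perm T};
  bopp : {perm T} -> {perm T};
  bzero : {perm T} }.
Arguments badd {T}. Arguments bopp {T}. Arguments bzero {T}.
Arguments pcomp {T}.

Arguments BraceData {T}.
Definition is_left_brace_on (T : finType) (G : {group {perm T}}) (B : brace_data T) : Prop :=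
  [/\ bzero B \in G,
      {in G &, forall a b, badd B a b \in G},
      {in G, forall a, bopp B a \in G} &
      {in G & G & G, forall a b c, badd B a (badd B b c) = badd B (badd B a b) c}] /\
  [/\       {in G &, forall a b, badd B a b = badd B b a},
      {in G, forall a, badd B (bzero B) a = a},
      {in G, forall a, badd B (bopp B a) a = bzero B} &
      {in G & G & G, forall a b c,
         badd B (pcomp a (badd B b c)) a = badd B (pcomp a b) (pcomp a c)}].

Definition blam (T : finType) (B : brace_data T) (a b : {perm T}) : {perm T} :=
  badd B (bopp B a) (pcomp a b).

Arguments is_left_brace_on {T}. Arguments blam {T}.
(* the solution associated to the brace (G,+,o):
   r(a,b) = (lambda_a(b), lambda_{lambda_a(b)}^{-1}(a)), using
   lambda_c^{-1} = lambda_{c^{-1}} *)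
Definition gT (T : finType) (G : {group {perm T}}) : finType := {g : {perm T} | g \in G}.
Arguments gT {T}.
Definition to_gT (T : finType) (G : {group {perm T}}) (g : {perm T}) : gT G :=
  insubd (@exist _ (fun g => g \in G) 1%g (group1 G)) g.
Arguments to_gT {T}.
Definition brace_sol (T : finType) (G : {group {perm T}}) (B : brace_data T) : sol :=
  @Sol (gT G) (fun q =>
    let a := val q.1 in let b := val q.2 in let c := blam B a b in
    (to_gT G c, to_gT G (blam B (c^-1)%g a))).

Arguments brace_sol {T}.
(* phi : G(X,r) -> G(X,r)perm, x |-> sigma_x, is a brace homomorphism:
   on generators, lambda_{sigma_x}(sigma_y) = sigma_{sigma_x(y)} *)
Definition phi_brace_hom (S : sol) (B : brace_data (scar S)) : Prop :=
  forall x y : scar S, blam B (sigma_perm S x) (sigma_perm S y) = sigma_perm S (ssig S x y).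

(* Let s_j = |Ret^j(X,r)|.  Transitivity of G(X,r) forces all fibres of
   X -> Ret(X,r) to have the same size, so s_(j+1) divides s_j; and once
   s_(j+1) = s_j the retraction is a bijection and the sequence stalls for ever.
   As (X,r) is multipermutation the sequence reaches 1, so until then every step
   removes a prime factor, and s_n = 1 since |X| has n prime factors.
   For the brace, "same image in Ret^k" is a congruence on G(X,r) for + and for
   every lambda_u, and lambda_g(sigma_y) = sigma_(g y).  As the sigma_y generate
   G(X,r), induction on k shows that g and h have the same image in
   Ret^k(G(X,r)) as soon as g y and h y have the same image in Ret^k(X,r) for
   every y. *)

From HB Require Import structures.
From mathcomp Require Import all_boot all_fingroup ssralg.
Import GRing.Theory.

Lemma to_permE (T : finType) (f : T -> T) : injective f -> to_perm f =1 f.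
Proof.
move=> injf x; have injfb : injectiveb [ffun y => f y].
  by apply/injectiveP => a b; rewrite !ffunE; apply: injf.
by rewrite /to_perm -pvalE /insubd insubT /= ffunE.
Qed.

(* The identity sigma_x sigma_y = sigma_(sigma_x y) sigma_(gamma_y x) given by
   the YBE, with gamma_y x recovered as sigma_(sigma_x y)^-1 x: the part of a
   solution that survives in its retract (a cycle set, in Rump's terms). *)
Definition sigma_braided (S : sol) : Prop :=
  (forall x, bijective (ssig S x)) /\
  (forall x y x', ssig S (ssig S x y) x' = x ->
     forall z, ssig S x (ssig S y z) = ssig S (ssig S x y) (ssig S x' z)).

Lemma solution_sigma_braided {S : sol} : is_solution S -> sigma_braided S.
Proof.
case=> invr bij_sig _ ybe; split=> // x y x' sig_x' z.
have sig_gam : ssig S (ssig S x y) (sgam S y x) = x.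
  by rewrite /ssig /sgam -surjective_pairing invr.
have -> : x' = sgam S y x by apply: (bij_inj (bij_sig (ssig S x y))); rewrite sig_x'.
have := ybe (x, y, z); rewrite /r12 /r23 /ssig /sgam.
case: (smap S (x, y)) => a b /=; case: (smap S (b, z)) => c d /=.
case: (smap S (a, c)) => e f /=; case: (smap S (y, z)) => g h /=.
case: (smap S (x, g)) => i j /=; case: (smap S (j, h)) => k l /=.
by case=> -> _ _.
Qed.

Section SigmaBraided.
Context {S : sol}.
Hypothesis braidS : sigma_braided S.
Local Notation X := (scar S).
Local Notation sig := (ssig S).

Lemma sigma_permE (x : X) : sigma_perm S x =1 sig x.
Proof. by apply: to_permE; apply: bij_inj; case: braidS. Qed.

Definition sigmaV (x : X) : X -> X := (sigma_perm S x)^-1%g.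

Lemma sigmaVK x : cancel (sigmaV x) (sig x).
Proof. by move=> z; rewrite -sigma_permE /sigmaV permKV. Qed.
Lemma sigmaK x : cancel (sig x) (sigmaV x).
Proof. by move=> z; rewrite -sigma_permE /sigmaV permK. Qed.

Lemma sigfP x y : sigf S x = sigf S y <-> sig x =1 sig y.
Proof.
split=> [exy z|exy]; last by apply/ffunP => z; rewrite !ffunE.
by have := congr1 (fun f : {ffun X -> X} => f z) exy; rewrite !ffunE.
Qed.

Lemma sigma_perm_sigf x y : sigf S x = sigf S y -> sigma_perm S x = sigma_perm S y.
Proof. by rewrite /sigma_perm /to_perm /sigf => ->. Qed.

Definition retract_compatible (f : X -> X) :=
  forall u v, sigf S u = sigf S v -> sigf S (f u) = sigf S (f v).

Lemma retract_compatible_sigmaV a : retract_compatible (sigmaV a).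
Proof.
have sigmaV_sig w z : sig (sigmaV a w) z = sigmaV a (sig w (sig (sigmaV w a) z)).
  have := braidS.2 a (sigmaV a w) (sigmaV w a); rewrite !sigmaVK => /(_ erefl z) <-.
  by rewrite sigmaK.
move=> u v euv; apply/sigfP => z; rewrite !sigmaV_sig.
by move/sigfP: (euv) => ->; rewrite /sigmaV (sigma_perm_sigf _ _ euv).
Qed.

(* sigma_a is a power of its inverse, since permutations have finite order. *)
Lemma retract_compatible_sigma a : retract_compatible (sig a).
Proof.
set p := (sigma_perm S a)^-1%g.
have compat_p k : retract_compatible (p ^+ k)%g.
  elim: k => [|k IHk] u v euv; first by rewrite !expg0 !perm1.
  by rewrite !expgSr !permM; apply: retract_compatible_sigmaV; apply: IHk.
move=> u v euv; rewrite -!sigma_permE -[sigma_perm S a]invgK -/p invg_expg.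
exact: compat_p.
Qed.

End SigmaBraided.

Lemma rcls_eqE (S : sol) x y : rcls S x = rcls S y <-> sigf S x = sigf S y.
Proof.
split=> [exy|exy]; last by apply: val_inj; apply/setP => z; rewrite !inE exy.
have : x \in val (rcls S y) by rewrite -exy inE.
by rewrite inE => /eqP.
Qed.

Lemma rcls_surj {S : sol} (c : retT S) : exists x, c = rcls S x.
Proof. by case: c => C /[dup] /imsetP [x _ ->] CP; exists x; apply: val_inj. Qed.

(* For sigma-braided S: x and y have the same image in Ret^k S (ret_rel_Ret). *)
Fixpoint ret_rel (S : sol) (k : nat) (x y : scar S) : Prop :=
  if k is k'.+1 then forall z, ret_rel S k' (ssig S x z) (ssig S y z) else x = y.

Lemma ret_rel_refl (S : sol) k x : ret_rel S k x x.
Proof. by elim: k x => //= k IHk x z. Qed.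

Lemma ret_rel_sym (S : sol) k x y : ret_rel S k x y -> ret_rel S k y x.
Proof. by elim: k x y => //= k IHk x y exy z; apply: IHk. Qed.

Lemma ret_rel_trans (S : sol) k x y w :
  ret_rel S k x y -> ret_rel S k y w -> ret_rel S k x w.
Proof.
elim: k x y w => [|k IHk] x y w /=; first by move=> ->.
by move=> exy eyw z; apply: IHk (exy z) (eyw z).
Qed.

Lemma ret_relS (S : sol) k x y : ret_rel S k x y -> ret_rel S k.+1 x y.
Proof. by elim: k x y => [|k IHk] x y /=; [move=> -> | move=> exy z; apply: IHk]. Qed.

Section Retract.
Context {S : sol}.
Hypothesis braidS : sigma_braided S.

Lemma ssig_Ret x z : ssig (Ret S) (rcls S x) (rcls S z) = rcls S (ssig S x z).
Proof.
rewrite /ssig /= /retmap /=.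
case: pickP => [x0|]; last by move/(_ x); rewrite inE eqxx.
case: pickP => [z0|]; last by move/(_ z); rewrite inE eqxx.
rewrite !inE => /eqP ez /eqP ex /=; apply/rcls_eqE.
move/sigfP: ex => ->; exact: retract_compatible_sigma.
Qed.

Lemma sigma_braided_Ret : sigma_braided (Ret S).
Proof.
split=> [c|c d c'].
  apply: injF_bij => d1 d2.
  have [x ->] := rcls_surj c; have [y1 ->] := rcls_surj d1; have [y2 ->] := rcls_surj d2.
  rewrite !ssig_Ret => /rcls_eqE e12; apply/rcls_eqE.
  by have := retract_compatible_sigmaV braidS x _ _ e12; rewrite !sigmaK.
have [x ->] := rcls_surj c; have [y ->] := rcls_surj d; have [x' ->] := rcls_surj c'.
rewrite !ssig_Ret => /rcls_eqE ex' e; have [z ->] := rcls_surj e.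
rewrite !ssig_Ret; set u := ssig S x y.
have sig_u : ssig S u (sigmaV u x) = x by rewrite sigmaVK.
have /sigfP -> : sigf S x' = sigf S (sigmaV u x).
  by have := retract_compatible_sigmaV braidS u _ _ ex'; rewrite sigmaK.
by rewrite (braidS.2 _ _ _ sig_u z).
Qed.

Lemma ret_rel_Ret k x y :
  ret_rel (Ret S) k (rcls S x) (rcls S y) <-> ret_rel S k.+1 x y.
Proof.
elim: k x y => [|k IHk] x y /=.
  by split=> [/rcls_eqE/sigfP|exy]; last apply/rcls_eqE/sigfP.
split=> exy z; first by apply/IHk; rewrite -!ssig_Ret; apply: exy.
by have [w ->] := rcls_surj z; rewrite !ssig_Ret; apply/IHk.
Qed.

End Retract.

Lemma card_iter_Ret1 k {S : sol} : sigma_braided S -> scar S ->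
  #|{: scar (iter k Ret S)}| = 1 <-> forall x y, ret_rel S k x y.
Proof.
elim: k S => [|k IHk] S braidS x0.
  split=> [/eqP/card1P [a ea] x y|exy].
    by have := ea x; have := ea y; rewrite !inE => /esym/eqP -> /esym/eqP ->.
  by apply: (eq_card1 (x := x0)) => y; rewrite !inE; apply/esym/eqP/exy.
rewrite iterSr; apply: iff_trans (IHk (Ret S) (sigma_braided_Ret braidS) (rcls S x0)) _.
split=> [exy x y|exy c d]; first by apply/(ret_rel_Ret braidS).
by have [x ->] := rcls_surj c; have [y ->] := rcls_surj d; apply/(ret_rel_Ret braidS).
Qed.

Definition sigma_transitive (S : sol) : Prop := forall x y : scar S,
  exists s : seq (scar S), y = foldl (fun z a => ssig S a z) x s.

Lemma card_Ret (S : sol) : #|{: scar (Ret S)}| = #|image (rcls S) (scar S)|.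
Proof.
rewrite [RHS]eq_cardT -?cardT // => c; have [x ->] := rcls_surj c.
exact: image_f.
Qed.

Lemma card_Ret_eq (S : sol) : #|{: scar (Ret S)}| = #|{: scar S}| <-> injective (rcls S).
Proof.
rewrite card_Ret; split=> [/eqP/image_injP rcls_inj x y|rcls_inj]; last exact: card_image.
exact: rcls_inj.
Qed.

Lemma card_Ret_leq (S : sol) : #|{: scar (Ret S)}| <= #|{: scar S}|.
Proof. by rewrite card_Ret leq_image_card. Qed.

Section RetractCard.
Context {S : sol}.
Hypothesis braidS : sigma_braided S.

Lemma sigma_transitive_Ret : sigma_transitive S -> sigma_transitive (Ret S).
Proof.
move=> transS c d; have [x ->] := rcls_surj c; have [y ->] := rcls_surj d.
have [s ->] := transS x y; exists (map (rcls S) s).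
by elim: s x => [|a s IHs] x //=; rewrite IHs ssig_Ret.
Qed.

Lemma card_retcls_sigma a x : #|retcls S x| <= #|retcls S (ssig S a x)|.
Proof.
have sig_inj : injective (ssig S a) by apply: bij_inj; case: braidS.
rewrite -(card_imset _ sig_inj); apply: subset_leq_card.
apply/subsetP => w /imsetP [v]; rewrite !inE => /eqP evx ->.
by apply/eqP; apply: retract_compatible_sigma.
Qed.

Lemma rcls_inj_Ret : injective (rcls S) -> injective (rcls (Ret S)).
Proof.
move=> rcls_inj c d; have [x ->] := rcls_surj c; have [y ->] := rcls_surj d.
move/rcls_eqE/sigfP => exy; apply/rcls_eqE/sigfP => z.
by apply: rcls_inj; have := exy (rcls S z); rewrite !ssig_Ret.
Qed.

Lemma card_Ret_stable :
  #|{: scar (Ret S)}| = #|{: scar S}| -> #|{: scar (Ret (Ret S))}| = #|{: scar (Ret S)}|.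
Proof. by move/card_Ret_eq/rcls_inj_Ret/card_Ret_eq. Qed.

Hypothesis transS : sigma_transitive S.

Lemma card_retcls_eq x y : #|retcls S x| = #|retcls S y|.
Proof.
suff card_le u v : #|retcls S u| <= #|retcls S v| by apply/eqP; rewrite eqn_leq !card_le.
have [s ->] := transS u v; elim: s u => [|a s IHs] u //=.
exact: leq_trans (card_retcls_sigma a u) (IHs _).
Qed.

Lemma card_Ret_mul_retcls x0 : #|{: scar S}| = #|{: scar (Ret S)}| * #|retcls S x0|.
Proof.
rewrite -[LHS]sum1_card (partition_big (rcls S) predT) //= -sum_nat_const.
apply: eq_big => // c _; have [z ->] := rcls_surj c.
rewrite (card_retcls_eq x0 z) -sum1_card; apply: eq_bigl => x.
by rewrite inE; apply/eqP/eqP => /rcls_eqE.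
Qed.

Lemma card_Ret_dvd : #|{: scar (Ret S)}| %| #|{: scar S}|.
Proof.
case: (pickP (@predT (scar S))) => [x0 _|noS].
  by rewrite (card_Ret_mul_retcls x0) dvdn_mulr.
by rewrite [#|{: scar S}|]eq_card0 ?dvdn0.
Qed.

End RetractCard.

Definition bigomega (m : nat) : nat := \sum_(q < m.+1) logn q m.

Lemma bigomegaE N m : m < N -> bigomega m = \sum_(q < N) logn q m.
Proof.
move=> ltmN; rewrite /bigomega (big_ord_widen N (logn^~ m)) // big_mkcond /=.
apply: eq_bigr => q _; case: ifPn => //; rewrite -leqNgt => ltmq.
apply/esym/eqP; rewrite -leqn0 leqNgt logn_gt0 mem_primes.
by apply/and3P => -[_ m_gt0 /(dvdn_leq m_gt0)]; rewrite leqNgt ltmq.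
Qed.

Lemma bigomegaM a b : 0 < a -> 0 < b -> bigomega (a * b) = bigomega a + bigomega b.
Proof.
move=> a_gt0 b_gt0; rewrite [bigomega a](@bigomegaE (a * b).+1) ?ltnS ?leq_pmulr //.
rewrite [bigomega b](@bigomegaE (a * b).+1) ?ltnS ?leq_pmull // -big_split /=.
by apply: eq_bigr => q _; rewrite lognM.
Qed.

Lemma bigomega_prod (I : finType) (F : I -> nat) : (forall i, 0 < F i) ->
  bigomega (\prod_i F i) = \sum_i bigomega (F i).
Proof.
move=> F_gt0; apply: (proj2 (big_ind2 (fun a b => 0 < a /\ bigomega a = b) _ _ _)).
- by split=> //; rewrite /bigomega big1 // => q _; rewrite logn1.
- by move=> a b c d [a_gt0 <-] [c_gt0 <-]; rewrite muln_gt0 a_gt0 bigomegaM.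
- by move=> i _; split.
Qed.

Lemma bigomega_prime p : prime p -> bigomega p = 1.
Proof.
move=> p_pr; rewrite /bigomega (bigD1 (Ordinal (ltnSn p))) //= logn_prime // eqxx.
by rewrite big1 // => q; rewrite logn_prime // -val_eqE /= eq_sym => /negbTE ->.
Qed.

Lemma bigomega_gt0 m : 1 < m -> 0 < bigomega m.
Proof.
move=> m_gt1; have le_pdiv : pdiv m < m.+1 by rewrite ltnS dvdn_leq ?pdiv_dvd // ltnW.
rewrite /bigomega (bigD1 (Ordinal le_pdiv)) //= ltn_addr // logn_gt0 mem_primes.
by rewrite pdiv_prime // ltnW // pdiv_dvd.
Qed.

Lemma bigomega_ltn d m : 0 < m -> d %| m -> d < m -> bigomega d < bigomega m.
Proof.
move=> m_gt0 dvd_dm lt_dm; have d_gt0 : 0 < d := dvdn_gt0 m_gt0 dvd_dm.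
have q_gt1 : 1 < m %/ d by rewrite ltn_divRL // mul1n.
rewrite -(divnK dvd_dm) mulnC bigomegaM ?(ltn_trans _ q_gt1) // -addn1 leq_add2l.
exact: bigomega_gt0.
Qed.

(* Until the chain reaches 1 it cannot stall, so bigomega drops at every step. *)
Lemma dvdn_chain_bigomega (s : nat -> nat) : 0 < s 0 ->
  (forall j, s j.+1 %| s j) -> (forall j, s j.+1 = s j -> s j.+2 = s j.+1) ->
  (exists k, s k = 1) -> s (bigomega (s 0)) = 1.
Proof.
move=> s0_gt0 s_dvd s_stall [k sk1].
have s_gt0 j : 0 < s j by elim: j => // j IHj; exact: dvdn_gt0 IHj (s_dvd j).
have s1_stays j t : s j = 1 -> s (j + t) = 1.
  move=> sj1; elim: t => [|t IHt]; rewrite ?addn0 // addnS.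
  by apply/eqP; rewrite -dvdn1 -IHt.
have stall_stays j t : s j.+1 = s j -> s (j + t) = s j.
  move=> sj; suff: s (j + t).+1 = s (j + t) /\ s (j + t) = s j by case.
  elim: t => [|t [IHt1 IHt2]]; first by rewrite addn0.
  by rewrite !addnS s_stall IHt1.
have bound j : s j != 1 -> bigomega (s j) + j <= bigomega (s 0).
  elim: j => [|j IHj] sj1; first by rewrite addn0.
  have sj1' : s j != 1 by apply: contra sj1 => /eqP sj1; rewrite -dvdn1 -sj1.
  have ne_sj : s j.+1 != s j.
    apply: contra sj1' => /eqP /(stall_stays j k) sj; apply/eqP.
    by rewrite -sj addnC s1_stays.
  rewrite addnS -addSn; apply: leq_trans (IHj sj1'); rewrite leq_add2r.
  by apply: bigomega_ltn; rewrite // ltn_neqAle ne_sj dvdn_leq.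
apply/eqP/contraT => sn1; have := bound _ sn1.
rewrite -[X in _ <= X]add0n leq_add2r leqn0 => /eqP omega0.
have : 1 < s (bigomega (s 0)) by rewrite ltn_neqAle eq_sym sn1 s_gt0.
by move/bigomega_gt0; rewrite omega0.
Qed.

Lemma Ggrp_ind (S : sol) (P : {perm scar S} -> Prop) :
  P 1%g -> (forall g x, g \in Ggrp S -> P g -> P (g * sigma_perm S x)%g) ->
  {in Ggrp S, forall g, P g}.
Proof.
move=> P1 PM g /gen_prodgP [m [c c_sig ->]].
elim: m c c_sig => [|m IHm] c c_sig; first by rewrite big_ord0.
rewrite big_ord_recr /=; have /imsetP [x _ ->] := c_sig ord_max.
apply: PM; last exact: IHm.
by apply: group_prod => i _; apply: mem_gen.
Qed.

Lemma indecomposable_sigma_transitive {S : sol} :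
  sigma_braided S -> indecomposable S -> sigma_transitive S.
Proof.
move=> braidS indS x y; have [g gG ->] := atransP2 indS (in_setT x) (in_setT y).
suff [s gE] : exists s, forall z, g z = foldl (fun z a => ssig S a z) z s.
  by exists s; rewrite -gE.
move: g gG; apply: Ggrp_ind => [|h a _ [s hE]]; first by exists [::] => z; rewrite perm1.
by exists (rcons s a) => z; rewrite permM hE foldl_rcons (sigma_permE braidS).
Qed.

Lemma iter_Ret_braided j (S : sol) : sigma_braided S -> sigma_braided (iter j Ret S).
Proof. by move=> braidS; elim: j => //= j; apply: sigma_braided_Ret. Qed.

Lemma iter_Ret_transitive j (S : sol) : sigma_braided S -> sigma_transitive S ->
  sigma_transitive (iter j Ret S).
Proof.
move=> braidS transS; elim: j => //= j.
exact/sigma_transitive_Ret/iter_Ret_braided.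
Qed.

Lemma card_iter_Ret_bigomega {S : sol} :
  sigma_braided S -> sigma_transitive S -> multipermutation S ->
  #|{: scar (iter (bigomega #|{: scar S}|) Ret S)}| = 1.
Proof.
move=> braidS transS [k [_ Sk1]]; pose s j := #|{: scar (iter j Ret S)}|.
apply: (dvdn_chain_bigomega s); last by exists k.
- have le_s j : s j <= s 0 by elim: j => // j; apply/leq_trans/card_Ret_leq.
  by rewrite -Sk1 le_s.
- move=> j; rewrite /s iterS; apply: card_Ret_dvd; first exact: iter_Ret_braided.
  exact: iter_Ret_transitive.
- by move=> j; rewrite /s !iterS; apply: card_Ret_stable; apply: iter_Ret_braided.
Qed.

Lemma to_gTK (T : finType) (G : {group {perm T}}) g : g \in G -> val (to_gT G g) = g.
Proof. by move=> gG; rewrite /to_gT val_insubd gG. Qed.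

(* A copy of [gT G], to carry the additive group of a brace on G. *)
Definition brace_elt (T : finType) (G : {group {perm T}}) : Type := Finite.sort (gT G).
Arguments brace_elt {T}.

Section Brace.
Context {T : finType} {G : {group {perm T}}} {B : brace_data T}.
Hypothesis braceB : is_left_brace_on G B.

HB.instance Definition _ := Finite.on (brace_elt G).

Definition gadd (a b : brace_elt G) : brace_elt G := to_gT G (badd B (val a) (val b)).
Definition gopp (a : brace_elt G) : brace_elt G := to_gT G (bopp B (val a)).
Definition gzero : brace_elt G := to_gT G (bzero B).

Lemma val_gadd a b : val (gadd a b) = badd B (val a) (val b).
Proof. by case: braceB => -[_ addG _ _] _; rewrite to_gTK //; apply: addG; apply: valP. Qed.
Lemma val_gopp a : val (gopp a) = bopp B (val a).
Proof. by case: braceB => -[_ _ oppG _] _; rewrite to_gTK //; apply: oppG; apply: valP. Qed.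
Lemma val_gzero : val gzero = bzero B.
Proof. by case: braceB => -[zeroG _ _ _] _; rewrite to_gTK. Qed.

Lemma gaddA : associative gadd.
Proof.
case: braceB => -[_ _ _ addA] _ a b c; apply: val_inj.
by rewrite !val_gadd addA //; apply: valP.
Qed.
Lemma gaddC : commutative gadd.
Proof.
case: braceB => _ [addC _ _ _] a b; apply: val_inj.
by rewrite !val_gadd addC //; apply: valP.
Qed.
Lemma gadd0 : left_id gzero gadd.
Proof.
case: braceB => _ [_ add0 _ _] a; apply: val_inj.
by rewrite val_gadd val_gzero add0 //; apply: valP.
Qed.
Lemma gaddN : left_inverse gzero gopp gadd.
Proof.
case: braceB => _ [_ _ addN _] a; apply: val_inj.
by rewrite val_gadd val_gopp val_gzero addN //; apply: valP.
Qed.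

HB.instance Definition _ := GRing.isZmodule.Build (brace_elt G) gaddA gaddC gadd0 gaddN.

Local Open Scope ring_scope.

Lemma val_add (a b : brace_elt G) : val (a + b) = badd B (val a) (val b).
Proof. exact: val_gadd. Qed.
Lemma val_opp (a : brace_elt G) : val (- a) = bopp B (val a).
Proof. exact: val_gopp. Qed.

(* [gmul a b] is the brace product a o b, i.e. the composite of a after b. *)
Definition gmul (a b : brace_elt G) : brace_elt G := to_gT G (val b * val a)%g.
Definition ginv (a : brace_elt G) : brace_elt G := to_gT G (val a)^-1%g.
Definition gone : brace_elt G := to_gT G 1%g.
Definition glam (a b : brace_elt G) : brace_elt G := to_gT G (blam B (val a) (val b)).

Lemma val_gmul a b : val (gmul a b) = (val b * val a)%g.
Proof. by rewrite to_gTK //; apply: groupM; apply: valP. Qed.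
Lemma val_ginv a : val (ginv a) = (val a)^-1%g.
Proof. by rewrite to_gTK // groupV; apply: valP. Qed.
Lemma val_gone : val gone = 1%g.
Proof. by rewrite to_gTK. Qed.

Lemma gmulA a b c : gmul a (gmul b c) = gmul (gmul a b) c.
Proof. by apply: val_inj; rewrite !val_gmul mulgA. Qed.
Lemma gmul1 a : gmul gone a = a.
Proof. by apply: val_inj; rewrite val_gmul val_gone mulg1. Qed.
Lemma gmulV a : gmul a (ginv a) = gone.
Proof. by apply: val_inj; rewrite val_gmul val_ginv val_gone mulVg. Qed.
Lemma gmulVl a : gmul (ginv a) a = gone.
Proof. by apply: val_inj; rewrite val_gmul val_ginv val_gone mulgV. Qed.

Lemma gmulDr a b c : gmul a (b + c) + a = gmul a b + gmul a c.
Proof.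
case: braceB => _ [_ _ _ distr]; apply: val_inj.
by rewrite !val_add !val_gmul val_add -distr //; apply: valP.
Qed.

Lemma gzero_one : 0 = gone.
Proof.
have gmul0 a : gmul a 0 = a by apply: (@addrI _ (gmul a 0)); rewrite -gmulDr !addr0.
by rewrite -(gmul0 gone); apply: val_inj; rewrite val_gmul val_gone mulg1.
Qed.

Lemma val_glam a b : val (glam a b) = blam B (val a) (val b).
Proof.
rewrite to_gTK //; case: braceB => -[_ addG oppG _] _.
by apply: addG; [apply: oppG | apply: groupM]; apply: valP.
Qed.

Lemma glamE a b : glam a b = - a + gmul a b.
Proof. by apply: val_inj; rewrite val_glam val_add val_opp val_gmul. Qed.

Lemma gmulE a b : gmul a b = a + glam a b.
Proof. by rewrite glamE addNKr. Qed.

Lemma glamD a b c : glam a (b + c) = glam a b + glam a c.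
Proof.
rewrite !glamE; have /(congr1 (fun x => x - a)) := gmulDr a b c; rewrite addrK => ->.
by rewrite !addrA addrAC.
Qed.

Lemma glam0 a : glam a 0 = 0.
Proof. by apply: (@addrI _ (glam a 0)); rewrite -glamD !addr0. Qed.

Lemma glamM a b c : glam (gmul a b) c = glam a (glam b c).
Proof.
apply: (@addrI _ (gmul a b)); rewrite -gmulE -gmulA (gmulE b c).
apply: (@addIr _ a); rewrite gmulDr (gmulE a (glam b c)).
by rewrite -addrA [a + _]addrC.
Qed.

Lemma glam1 c : glam gone c = c.
Proof. by rewrite glamE gmul1 -gzero_one oppr0 add0r. Qed.

Lemma glam0l c : glam 0 c = c.
Proof. by rewrite gzero_one glam1. Qed.

Lemma glamK a c : glam a (glam (ginv a) c) = c.
Proof. by rewrite -glamM gmulV glam1. Qed.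
Lemma glamKV a c : glam (ginv a) (glam a c) = c.
Proof. by rewrite -glamM gmulVl glam1. Qed.

Lemma gaddE a b : a + b = gmul a (glam (ginv a) b).
Proof. by rewrite gmulE glamK. Qed.

Lemma sigma_braided_brace : sigma_braided (brace_sol G B).
Proof.
split=> [a|a b a' /= glam_a' z].
  by apply: injF_bij => c1 c2 /(congr1 (glam (ginv a))); rewrite !glamKV.
change (glam a (glam b z) = glam (glam a b) (glam a' z)); rewrite -!glamM.
suff -> : gmul a b = gmul (glam a b) a' by [].
by rewrite gmulE addrC gmulE; congr (_ + _).
Qed.

Section LiftCongruence.
Variable E : brace_elt G -> brace_elt G -> Prop.

Definition lift_rel a b := forall c, E (glam a c) (glam b c).

Hypotheses (E_refl : forall a, E a a) (E_sym : forall a b, E a b -> E b a)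
  (E_trans : forall a b c, E a b -> E b c -> E a c).
Hypothesis E_glam : forall u a b, E a b -> E (glam u a) (glam u b).
Hypothesis E_add : forall a a' b b', E a a' -> E b b' -> E (a + b) (a' + b').
Hypothesis E_lift : forall a b, E a b -> lift_rel a b.

Definition glam_trivial j := forall d, E (glam j d) d.

Lemma glam_trivial_E0 i : E i 0 -> glam_trivial i.
Proof. by move=> ei0 d; rewrite -[X in E _ X]glam0l; apply: E_lift. Qed.

Lemma glam_addE0 x i d : E i 0 -> E (glam (x + i) d) (glam x d).
Proof.
move=> ei0; rewrite gaddE glamM; apply/E_glam/glam_trivial_E0.
by rewrite -(glam0 (ginv x)); apply: E_glam.
Qed.

(* Write u o j o u^-1 = glam u j + e with e = u o glam j u^-1, which is E-null. *)
Lemma glam_trivial_glam u j : glam_trivial j -> glam_trivial (glam u j).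
Proof.
move=> jT d; pose e := gmul u (glam j (ginv u)).
have e0 : E e 0.
  rewrite /e gmulE gzero_one -(gmulV u) (gmulE u (ginv u)).
  by apply: E_add; [apply: E_refl | apply: E_glam; apply: jT].
have conjE : gmul u (gmul j (ginv u)) = glam u j + e.
  by rewrite /e gmulE (gmulE j) glamD gmulE addrCA.
apply: (E_trans _ (glam (glam u j + e) d)); first exact/E_sym/glam_addE0.
by rewrite -conjE !glamM; have := E_glam u _ _ (jT (glam (ginv u) d)); rewrite glamK.
Qed.

Lemma glam_addT x i d : glam_trivial i -> E (glam (x + i) d) (glam x d).
Proof. by move=> iT; rewrite gaddE glamM; apply/E_glam/glam_trivial_glam. Qed.

Lemma glam_trivialD i i' : glam_trivial i -> glam_trivial i' -> glam_trivial (i + i').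
Proof. by move=> iT i'T d; rewrite addrC; apply: E_trans (glam_addT _ _ d iT) (i'T d). Qed.

Lemma lift_relP a b : lift_rel a b -> exists2 i, glam_trivial i & b = a + i.
Proof.
move=> eab; exists (glam a (gmul (ginv a) b)); last by rewrite -gmulE gmulA gmulV gmul1.
apply: glam_trivial_glam => d; rewrite glamM.
by have := E_glam (ginv a) _ _ (E_sym _ _ (eab d)); rewrite glamKV.
Qed.

Lemma lift_rel_glam u a b : lift_rel a b -> lift_rel (glam u a) (glam u b).
Proof.
case/lift_relP=> i iT -> d.
by rewrite glamD; apply/E_sym/glam_addT/glam_trivial_glam.
Qed.

Lemma lift_rel_add a a' b b' : lift_rel a a' -> lift_rel b b' -> lift_rel (a + b) (a' + b').
Proof.
case/lift_relP=> i iT -> /lift_relP [i' i'T ->] d.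
by rewrite addrACA; apply/E_sym/glam_addT/glam_trivialD.
Qed.

End LiftCongruence.

Lemma ret_rel_brace_congr k :
  (forall u a b : brace_elt G, ret_rel (brace_sol G B) k a b ->
     ret_rel (brace_sol G B) k (glam u a) (glam u b)) /\
  (forall a a' b b' : brace_elt G,
     ret_rel (brace_sol G B) k a a' -> ret_rel (brace_sol G B) k b b' ->
     ret_rel (brace_sol G B) k (a + b) (a' + b')).
Proof.
elim: k => [|k [IHglam IHadd]]; first by split=> [u a b -> | a a' b b' -> ->].
have E_refl := @ret_rel_refl (brace_sol G B) k.
have E_sym := @ret_rel_sym (brace_sol G B) k.
have E_trans := @ret_rel_trans (brace_sol G B) k.
have E_lift := @ret_relS (brace_sol G B) k.
by split; [apply: lift_rel_glam | apply: lift_rel_add].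
Qed.

End Brace.

Arguments glam {T G} B.

Section BraceOfSolution.
Context {S : sol}.
Hypothesis braidS : sigma_braided S.
Context {B : brace_data (scar S)}.
Hypothesis braceB : is_left_brace_on (Ggrp S) B.
Hypothesis phiB : phi_brace_hom S B.
Local Notation G := (Ggrp S).

Definition sigma_elt (y : scar S) : brace_elt G := to_gT G (sigma_perm S y).

Lemma val_sigma_elt y : val (sigma_elt y) = sigma_perm S y.
Proof. by rewrite to_gTK // mem_gen // imset_f. Qed.

Lemma glam_sigma_elt x y : glam B (sigma_elt x) (sigma_elt y) = sigma_elt (ssig S x y).
Proof. by apply: val_inj; rewrite (val_glam braceB) !val_sigma_elt phiB. Qed.

Lemma brace_elt_ind (P : brace_elt G -> Prop) :
  P gone -> (forall x g, P g -> P (gmul (sigma_elt x) g)) -> forall g, P g.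
Proof.
move=> P1 PM g; have -> : g = to_gT G (val g).
  by apply: val_inj; rewrite to_gTK //; apply: valP.
move: (val g) (valP g); apply: Ggrp_ind => // h x hG Ph.
have -> : to_gT G (h * sigma_perm S x)%g = gmul (sigma_elt x) (to_gT G h).
  apply: val_inj; rewrite val_gmul val_sigma_elt !to_gTK //.
  by rewrite groupM // mem_gen // imset_f.
exact: PM.
Qed.

Lemma glam_sigma_eltE (g : brace_elt G) y : glam B g (sigma_elt y) = sigma_elt (val g y).
Proof.
elim/brace_elt_ind: g => [|x g IHg]; first by rewrite (glam1 braceB) val_gone perm1.
rewrite (glamM braceB) IHg glam_sigma_elt val_gmul permM val_sigma_elt.
by rewrite (sigma_permE braidS).
Qed.

Lemma ret_rel_brace_pointwise k (g h : brace_elt G) :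
  (forall y, ret_rel S k (val g y) (val h y)) -> ret_rel (brace_sol G B) k g h.
Proof.
elim: k g h => [|k IHk] g h gh; first by apply/val_inj/permP.
move=> c; change (ret_rel (brace_sol G B) k (glam B g c) (glam B h c)).
elim/brace_elt_ind: c g h gh => [|x c IHc] g h gh.
  by rewrite -(gzero_one braceB) !(glam0 braceB); apply: ret_rel_refl.
rewrite !(gmulE braceB) !(glamD braceB) !glam_sigma_eltE -!(glamM braceB).
apply: (ret_rel_brace_congr braceB k).2.
  by apply: IHk => y; rewrite !val_sigma_elt !(sigma_permE braidS); apply: gh.
by apply: IHc => y; rewrite !val_gmul !permM; apply: gh.
Qed.

End BraceOfSolution.

Theorem corollary4p2 (n : nat) (p : 'I_n -> nat) (S : sol) :
  (0 < n)%N ->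
  (forall i, prime (p i)) -> injective p ->
  #|{: scar S}| = (\prod_(i < n) p i)%N ->
  is_solution S -> indecomposable S -> multipermutation S ->
  mpl_le S n /\
  (forall B : brace_data (scar S),
     is_left_brace_on (Ggrp S) B -> phi_brace_hom S B ->
     mpl_le (brace_sol (Ggrp S) B) n).
Proof.
move=> n_gt0 p_prime _ cardS solS indS mpS.
have braidS := solution_sigma_braided solS.
have transS := indecomposable_sigma_transitive braidS indS.
have omegaS : bigomega #|{: scar S}| = n.
  rewrite cardS bigomega_prod => [|i]; last exact: prime_gt0.
  by rewrite (eq_bigr (fun=> 1)) ?sum1_card ?card_ord // => i _; apply: bigomega_prime.
have Sn1 := card_iter_Ret_bigomega braidS transS mpS; rewrite omegaS in Sn1.
split=> [|B braceB phiB]; exists n; rewrite n_gt0 leqnn; split=> //.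
apply/(card_iter_Ret1 n (sigma_braided_brace braceB) gone) => g h.
apply: (ret_rel_brace_pointwise braidS braceB phiB) => y.
exact: (card_iter_Ret1 n braidS y).1.
Qed.
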